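(* Let $m$ be an even positive integer, $q=2^m$, and let $\{u_1,u_2,u_3\}$ be a $3$-element subset of $U_{q+1}$. Let $M_3$ be the $4\times3$ matrix whose $j$-th column is $(u_j^{-5},u_j^{-3},u_j^{3},u_j^{5})^T$. Then $\mathrm{rank}(M_3)=3$.
   Context: $U_{q+1}$ denotes the set of $(q+1)$-th roots of unity in $\mathrm{GF}(q^2)$; ranks are over $\mathrm{GF}(q^2)$. *)

From HB Require Import structures.
From mathcomp Require Import all_boot all_order all_algebra all_field.
Set Implicit Arguments. Unset Strict Implicit. Unset Printing Implicit Defensive.
Import GRing.Theory.
Local Open Scope ring_scope.

Definition M3 (F : fieldType) (u : 'I_3 -> F) : 'M[F]_(4, 3) :=
  \matrix_(i < 4, j < 3)
    nth 0 [:: (u j) ^- 5; (u j) ^- 3; (u j) ^+ 3; (u j) ^+ 5] i.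

Definition in_U (F : fieldType) (q : nat) (x : F) : bool := x ^+ q.+1 == 1.

(* Write x_j = u_j^2.  Clearing denominators, the minors of M_3 on rows
   {1,2,3} and {1,2,4} are the Schur polynomials x^(0,1,4) and x^(0,1,5),
   i.e. the Vandermonde product of the x_j times the complete homogeneous
   symmetric polynomials h_2(x) and h_3(x).  The Vandermonde factor is nonzero
   because squaring is injective in characteristic 2.  Since
   h_3(x_0,x_1,x_2) = x_0 h_2(x_0,x_1,x_2) + h_3(x_1,x_2) and
   h_3(x_1,x_2) = (x_1 + x_2)^3 in characteristic 2, both minors vanishing
   would force x_1 = x_2. *)

From HB Require Import structures.
From mathcomp Require Import all_boot all_order all_algebra all_field.
From mathcomp Require Import ring.
Set Implicit Arguments. Unset Strict Implicit. Unset Printing Implicit Defensive.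
Import GRing.Theory.
Local Open Scope ring_scope.

Lemma det_mx33 (R : comPzRingType) (A : 'M[R]_3) : \det A =
  A 0 0 * (A 1 1 * A 2 2 - A 1 2 * A 2 1) - A 0 1 * (A 1 0 * A 2 2 - A 1 2 * A 2 0)
  + A 0 2 * (A 1 0 * A 2 1 - A 1 1 * A 2 0).
Proof.
(* Indexing by naturals makes the entries produced by the cofactor expansion
   recognisable by [ring]. *)
pose a (i j : nat) := A (inord i) (inord j).
have Aa (i j : 'I_3) : A i j = a i j by rewrite /a !inord_val.
rewrite (expand_det_row _ 0) /cofactor !big_ord_recr big_ord0 /=.
rewrite !(expand_det_row _ 0) /cofactor !big_ord_recr !big_ord0 /= !det_mx11 !mxE.
by rewrite !Aa; ring.
Qed.

Lemma rank_rowsub_unit (F : fieldType) m n (f : 'I_n -> 'I_m) (A : 'M[F]_(m, n)) :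
  rowsub f A \in unitmx -> \rank A = n.
Proof.
move=> Af; apply/eqP; rewrite eqn_leq rank_leq_col -{1}(mxrank_unit Af).
exact/mxrankS/rowsub_sub.
Qed.

Definition vdm3 (R : pzRingType) (x0 x1 x2 : R) : R :=
  (x1 - x0) * (x2 - x0) * (x2 - x1).

Definition complete_sym2 (R : pzSemiRingType) (x0 x1 x2 : R) : R :=
  x0 ^+ 2 + x1 ^+ 2 + x2 ^+ 2 + x0 * x1 + x0 * x2 + x1 * x2.

Definition complete_sym3 (R : pzSemiRingType) (x0 x1 x2 : R) : R :=
  x0 ^+ 3 + x1 ^+ 3 + x2 ^+ 3 + x0 ^+ 2 * x1 + x0 ^+ 2 * x2 + x1 ^+ 2 * x0
  + x1 ^+ 2 * x2 + x2 ^+ 2 * x0 + x2 ^+ 2 * x1 + x0 * x1 * x2.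

Section CharacteristicTwo.

Variable F : fieldType.
Hypothesis charF2 : 2%N \in [pchar F].

Lemma sqrf_inj_pchar2 : injective (fun x : F => x ^+ 2).
Proof. exact: fmorph_inj (pFrobenius_aut charF2). Qed.

Lemma vdm3_sqr_neq0 (x0 x1 x2 : F) :
  uniq [:: x0; x1; x2] -> vdm3 (x0 ^+ 2) (x1 ^+ 2) (x2 ^+ 2) != 0.
Proof.
have sqr_neq (x y : F) : x != y -> y ^+ 2 - x ^+ 2 != 0.
  by rewrite subr_eq0 eq_sym (inj_eq sqrf_inj_pchar2).
rewrite /= !inE negb_or => /and3P[/andP[n01 n02] n12 _].
by rewrite /vdm3 !mulf_neq0 ?sqr_neq.
Qed.

Lemma complete_sym23_eq0_pchar2 (x0 x1 x2 : F) :
  complete_sym2 x0 x1 x2 = 0 -> complete_sym3 x0 x1 x2 = 0 -> x1 = x2.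
Proof.
move=> h2_0 h3_0.
have two0 : 2%:R = 0 :> F := pcharf0 charF2.
have cube0 : (x1 + x2) ^+ 3 = 0.
  have -> : (x1 + x2) ^+ 3 = complete_sym3 x0 x1 x2 - x0 * complete_sym2 x0 x1 x2
    + 2%:R * (x1 ^+ 2 * x2 + x1 * x2 ^+ 2) by rewrite /complete_sym2 /complete_sym3; ring.
  by rewrite h2_0 h3_0 two0 !(mulr0, mul0r, subr0, addr0).
move/eqP: cube0; rewrite expf_eq0 /= addr_eq0 => /eqP ->.
exact: oppr_pchar2.
Qed.

End CharacteristicTwo.

Definition M3_rows (k : nat) (i : 'I_3) : 'I_4 := inord (nth 0%N [:: 0; 1; k]%N i).

Section Minors.

Variables (F : fieldType) (u : 'I_3 -> F).
Hypothesis u_neq0 : forall j, u j != 0.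

Lemma det_M3_rows2 :
  \det (rowsub (M3_rows 2) (M3 u)) * (u 0 * u 1 * u 2) ^+ 5 =
  vdm3 (u 0 ^+ 2) (u 1 ^+ 2) (u 2 ^+ 2) * complete_sym2 (u 0 ^+ 2) (u 1 ^+ 2) (u 2 ^+ 2).
Proof.
rewrite det_mx33 !mxE /M3_rows /= !inordK //= /vdm3 /complete_sym2.
by field; rewrite !u_neq0.
Qed.

Lemma det_M3_rows3 :
  \det (rowsub (M3_rows 3) (M3 u)) * (u 0 * u 1 * u 2) ^+ 5 =
  vdm3 (u 0 ^+ 2) (u 1 ^+ 2) (u 2 ^+ 2) * complete_sym3 (u 0 ^+ 2) (u 1 ^+ 2) (u 2 ^+ 2).
Proof.
rewrite det_mx33 !mxE /M3_rows /= !inordK //= /vdm3 /complete_sym3.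
by field; rewrite !u_neq0.
Qed.

Lemma rank_M3_pchar2 : 2%N \in [pchar F] -> injective u -> \rank (M3 u) = 3%N.
Proof.
move=> charF2 u_inj.
have minor_eq0 k :
    rowsub (M3_rows k) (M3 u) \notin unitmx -> \det (rowsub (M3_rows k) (M3 u)) = 0.
  by rewrite unitmxE unitfE negbK => /eqP.
have [unit2|/minor_eq0 det2] := boolP (rowsub (M3_rows 2) (M3 u) \in unitmx).
  exact: rank_rowsub_unit unit2.
have [unit3|/minor_eq0 det3] := boolP (rowsub (M3_rows 3) (M3 u) \in unitmx).
  exact: rank_rowsub_unit unit3.
have /(vdm3_sqr_neq0 charF2) vdm_neq0 : uniq [:: u 0; u 1; u 2].
  by rewrite /= !inE !(inj_eq u_inj).
move: det_M3_rows2 det_M3_rows3; rewrite det2 det3 !mul0r.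
move=> /esym/eqP; rewrite mulf_eq0 (negbTE vdm_neq0) => /eqP h2_0.
move=> /esym/eqP; rewrite mulf_eq0 (negbTE vdm_neq0) => /eqP h3_0.
have /(sqrf_inj_pchar2 charF2)/u_inj :=
  complete_sym23_eq0_pchar2 charF2 h2_0 h3_0.
by move/(congr1 val).
Qed.

End Minors.

Theorem lemma16 (F : finFieldType) (m : nat) (hm : (0 < m)%N) (hev : ~~ odd m)
  (hF : #|F| = ((2 ^ m) ^ 2)%N)
  (u : 'I_3 -> F) (hinj : injective u) (hU : forall j, in_U (2 ^ m) (u j)) :
  \rank (M3 u) = 3%N.
Proof.
have charF2 : 2%N \in [pchar F] by apply: (card_finPcharP (n := m * 2)); rewrite ?hF ?expnM.
have u_neq0 j : u j != 0.
  apply: contraTneq (hU j) => ->; by rewrite /in_U expr0n eq_sym oner_eq0.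
exact: rank_M3_pchar2.
Qed.
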